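(* Let $P$ be a locally finite poset, $R$ a commutative unital ring, and $n\ge 3$. Then $I^n(P,R)$ is not third power associative (i.e. there exists $f\in I^n(P,R)$ with $f(ff)\ne (ff)f$), unless $P$ is an antichain.
   Context: For a poset $P$ and $n\ge 2$, $P^n_\le=\{(x_1,\dots,x_n)\in P^n: x_1\le\dots\le x_n\}$. For $\mathbf{x}=(x_1,\dots,x_n)\in P^n_\le$, $\mathcal{I}(\mathbf{x})=[x_1,x_2]\times\dots\times[x_{n-1},x_n]\subseteq P^{n-1}_\le$, where $[a,b]=\{c\in P: a\le c\le b\}$. The $n$-th partial flag incidence algebra $I^n(P,R)$ is the $R$-module of functions $f:P^n_\le\to R$ with multiplication $(fg)(\mathbf{x})=\sum_{\mathbf{y}\in\mathcal{I}(\mathbf{x})}f(x_1,\mathbf{y})g(\mathbf{y},x_n)$. *)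

From HB Require Import structures.
From mathcomp Require Import all_boot all_order all_algebra.
From Stdlib Require Import ClassicalEpsilon.
Set Implicit Arguments. Unset Strict Implicit. Unset Printing Implicit Defensive.
Import Order.TTheory GRing.Theory.
Local Open Scope order_scope.

Definition locally_finite (d : Order.disp_t) (P : porderType d) : Prop :=
  forall a b : P, exists s : seq P, forall c : P, (c \in s) = (a <= c <= b).

Definition antichain (d : Order.disp_t) (P : porderType d) : Prop :=
  forall a b : P, a <= b -> a = b.

Section PFIA.
Variables (d : Order.disp_t) (P : porderType d) (lf : locally_finite P).

Definition itv (a b : P) : seq P :=
  undup (proj1_sig (constructive_indefinite_description _ (lf a b))).

(* chains x0 [:: x1; ...; xk] enumerates [x0,x1] x [x1,x2] x ... x [x_{k-1},x_k]
   as lists of length k. *)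
Fixpoint chains (x0 : P) (xs : seq P) : seq (seq P) :=
  match xs with
  | [::] => [:: [::]]
  | x1 :: xs' => [seq y :: ys | y <- itv x0 x1, ys <- chains x1 xs']
  end.

Definition Iset (x : seq P) : seq (seq P) :=
  if x is x1 :: xs then chains x1 xs else [::].

Variable R : comNzRingType.

(* Elements of I^n(P,R) are represented by functions seq P -> R; only their
   values on chains x_1 <= ... <= x_n of length n are relevant.
   (f g)(x) = sum_{y in I(x)} f(x_1, y) g(y, x_n). *)
Definition pfmul (f g : seq P -> R) (x : seq P) : R :=
  if x is x1 :: xs then
    (\sum_(y <- chains x1 xs) f (x1 :: y) * g (rcons y (last x1 xs)))%R
  else 0%R.

End PFIA.

From HB Require Import structures.
From mathcomp Require Import all_boot all_order all_algebra.
From Stdlib Require Import Classical ClassicalEpsilon.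
Import Order.TTheory GRing.Theory.
Set Implicit Arguments. Unset Strict Implicit. Unset Printing Implicit Defensive.
Local Open Scope order_scope.

(* Pick a < b, let T = (b,...,b) have length n - 3 and let f be the indicator
   of the chains with entries in {a, b} that contain a.  Each product below is
   a sum over [a, b] to which only the endpoints contribute.  At x = (a,b,b,T),
   f(ff)(x) = f(a,a,b,T) ff(x) + f(x) ff(b,b,b,T) = 1 * 1 + 1 * 0, whereas
   (ff)f(x) = ff(a,a,b,T) f(x) + ff(x) f(b,b,b,T) = ff(a,a,b,T) = 2, because
   ff(a,a,b,T) = f(a,a,a,T) f(a,a,b,T) + f(a,a,b,T) f(a,b,b,T). *)

Lemma last_nseq (T : Type) (x : T) k : last x (nseq k x) = x.
Proof. by elim: k. Qed.

Lemma rcons_nseq (T : Type) (x : T) k : rcons (nseq k x) x = nseq k.+1 x.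
Proof. by rewrite -cats1 -(nseqD k 1) addn1. Qed.

Section Chains.
Variables (d : Order.disp_t) (P : porderType d) (lf : locally_finite P).

Lemma mem_itv (a b c : P) : (c \in itv lf a b) = (a <= c <= b).
Proof.
by rewrite /itv mem_undup; case: constructive_indefinite_description.
Qed.

Lemma itv_id (c : P) : itv lf c c = [:: c].
Proof.
apply: perm_small_eq => //; apply: uniq_perm; rewrite ?undup_uniq // => x.
by rewrite mem_itv inE -eq_le.
Qed.

Lemma chains_nseq (b : P) k : chains lf b (nseq k b) = [:: nseq k b].
Proof. by elim: k => //= k ->; rewrite itv_id. Qed.

Lemma chains_nseqS (a b : P) k :
  chains lf a (nseq k.+1 b) = [seq c :: nseq k b | c <- itv lf a b].
Proof. by rewrite /= chains_nseq allpairs1r. Qed.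

Lemma chains_cons_id (a : P) xs :
  chains lf a (a :: xs) = [seq a :: ys | ys <- chains lf a xs].
Proof. by rewrite /= itv_id allpairs1l. Qed.

Lemma big_itv_pair (R : nmodType) (a b : P) (F : P -> R) :
  a < b -> (forall c, c != a -> c != b -> F c = 0%R) ->
  (\sum_(c <- itv lf a b) F c = F a + F b)%R.
Proof.
move=> lt_ab F0; have mem_a : a \in itv lf a b by rewrite mem_itv lexx ltW.
have mem_b : b \in itv lf a b by rewrite mem_itv lexx ltW.
rewrite (bigD1_seq a) ?undup_uniq //= -big_filter (bigD1_seq b) ?filter_uniq ?undup_uniq //=;
  last by rewrite mem_filter gt_eqF.
rewrite big_seq_cond big1 ?addr0 // => c /andP[]; rewrite mem_filter => /andP[ca _] cb.
exact: F0.
Qed.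

Variable R : comNzRingType.
Implicit Types f g : seq P -> R.

Lemma pfmul_nseqS f g (a b : P) k :
  pfmul lf f g (a :: nseq k.+1 b) =
  (\sum_(c <- itv lf a b) f (a :: c :: nseq k b) * g (c :: nseq k.+1 b))%R.
Proof.
rewrite /pfmul chains_nseqS big_map [last _ _]/= last_nseq.
by under eq_bigr do rewrite rcons_cons rcons_nseq.
Qed.

Lemma pfmul_cons_id_nseqS f g (a b : P) k :
  pfmul lf f g (a :: a :: nseq k.+1 b) =
  (\sum_(c <- itv lf a b) f (a :: a :: c :: nseq k b) * g (a :: c :: nseq k.+1 b))%R.
Proof.
rewrite /pfmul chains_cons_id big_map chains_nseqS big_map [last _ _]/= last_nseq.
by under eq_bigr do rewrite !rcons_cons rcons_nseq.
Qed.

End Chains.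

Lemma exists_lt_of_not_antichain d (P : porderType d) :
  ~ antichain P -> exists a b : P, a < b.
Proof.
move=> not_anti; apply: NNPP => no_lt; apply: not_anti => a b le_ab.
apply: NNPP => neq_ab; apply: no_lt; exists a, b.
by rewrite lt_def le_ab andbT; apply/eqP => eq_ba; exact: neq_ab.
Qed.

Section Witness.
Variables (d : Order.disp_t) (P : porderType d) (lf : locally_finite P).
Variables (R : comNzRingType) (a b : P).
Hypothesis lt_ab : a < b.
Local Open Scope ring_scope.

Definition ind_ab (t : seq P) : R := ((a \in t) && all (pred2 a b) t)%:R.

Lemma ind_ab_out c t : c \in t -> c != a -> c != b -> ind_ab t = 0.
Proof.
move=> ct ca cb; rewrite /ind_ab; suff /negbTE-> : ~~ all (pred2 a b) t by rewrite andbF.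
by apply/allPn; exists c; rewrite //= negb_or ca.
Qed.

Lemma ind_ab_nseq k : ind_ab (nseq k b) = 0.
Proof. by rewrite /ind_ab mem_nseq lt_eqF ?andbF. Qed.

Lemma ind_ab_ncons m k : ind_ab (ncons m.+1 a (nseq k b)) = 1.
Proof.
by rewrite /ind_ab /= inE eqxx -cat_nseq all_cat !all_nseq /= !eqxx !orbT.
Qed.

Lemma ind_ab_sq_nseq k : pfmul lf ind_ab ind_ab (nseq k.+3 b) = 0.
Proof.
by rewrite (pfmul_nseqS lf _ _ b b k.+1) itv_id big_seq1 (ind_ab_nseq k.+3) mul0r.
Qed.

Lemma ind_ab_sq_cons_nseq k : pfmul lf ind_ab ind_ab (a :: nseq k.+2 b) = 1.
Proof.
rewrite pfmul_nseqS big_itv_pair // => [|c ca cb]; last first.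
  by rewrite (@ind_ab_out c) ?mul0r // !inE eqxx orbT.
rewrite (ind_ab_ncons 1 k.+1) (ind_ab_ncons 0 k.+2) (ind_ab_nseq k.+3).
by rewrite mulr0 addr0 mulr1.
Qed.

Lemma ind_ab_sq_cons_id_nseq k : pfmul lf ind_ab ind_ab (a :: a :: nseq k.+1 b) = 1 + 1.
Proof.
rewrite pfmul_cons_id_nseqS big_itv_pair // => [|c ca cb]; last first.
  by rewrite (@ind_ab_out c) ?mul0r // !inE eqxx !orbT.
by rewrite (ind_ab_ncons 2 k) (ind_ab_ncons 1 k.+1) (ind_ab_ncons 0 k.+2) !mulr1.
Qed.

Lemma ind_ab_mul_sq k : pfmul lf ind_ab (pfmul lf ind_ab ind_ab) (a :: nseq k.+2 b) = 1.
Proof.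
rewrite pfmul_nseqS big_itv_pair // => [|c ca cb]; last first.
  by rewrite (@ind_ab_out c) ?mul0r // !inE eqxx orbT.
rewrite ind_ab_sq_cons_nseq ind_ab_sq_nseq (ind_ab_ncons 1 k.+1).
by rewrite mulr0 addr0 mulr1.
Qed.

Lemma ind_ab_sq_mul k :
  pfmul lf (pfmul lf ind_ab ind_ab) ind_ab (a :: nseq k.+2 b) = 1 + 1.
Proof.
rewrite pfmul_nseqS big_itv_pair // => [|c ca cb]; last first.
  by rewrite (@ind_ab_out c (c :: _)) ?mulr0 // inE eqxx.
rewrite ind_ab_sq_cons_id_nseq (ind_ab_ncons 0 k.+2) (ind_ab_nseq k.+3).
by rewrite mulr0 addr0 mulr1.
Qed.

End Witness.

Theorem corollary1p3 (d : Order.disp_t) (P : porderType d)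
  (lf : locally_finite P) (R : comNzRingType) (n : nat) :
  (3 <= n)%N ->
  ~ antichain P ->
  exists (f : seq P -> R) (x : seq P),
    [/\ size x = n, sorted <=%O x &
        pfmul lf f (pfmul lf f f) x != pfmul lf (pfmul lf f f) f x].
Proof.
case: n => [|[|[|k]]] // _ /exists_lt_of_not_antichain[a [b lt_ab]].
exists (ind_ab R a b), (a :: nseq k.+2 b); split.
- by rewrite /= size_nseq.
- by rewrite /= ltW //= lexx; elim: k => //= k ->; rewrite lexx.
rewrite ind_ab_mul_sq // ind_ab_sq_mul //.
by rewrite -[X in X != _]addr0 (can_eq (addKr 1%R)) eq_sym oner_eq0.
Qed.
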